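(* Let $\mathfrak g\xrightarrow{\mu}\mathfrak h$ be a crossed module of Lie algebras with action $\mathcal L$. Let $\omega\in\bigwedge^2\mathfrak h^*$ and $\varphi\in(\mathfrak g\oplus\mathfrak h)^*$ satisfy: (1) $-\omega([y_0,y_1],y_2)+\omega([y_0,y_2],y_1)-\omega([y_1,y_2],y_0)=0$ for all $y_0,y_1,y_2\in\mathfrak h$; (2) $\varphi(x_2,y)-\varphi(x_1+x_2,y)+\varphi(x_1,y+\mu(x_2))=0$ for all $x_1,x_2\in\mathfrak g$, $y\in\mathfrak h$; (3) $\omega(y_0,y_1)-\omega(y_0+\mu(x_0),y_1+\mu(x_1))=\varphi([(x_0,y_0),(x_1,y_1)]_{\mathcal L})$ for all $(x_0,y_0),(x_1,y_1)\in\mathfrak g\oplus\mathfrak h$. Let $\mathfrak h\oplus^\omega\mathbb R$ be $\mathfrak h\oplus\mathbb R$ with bracket $[(y_0,\lambda_0),(y_1,\lambda_1)]_\omega=([y_0,y_1],-\omega(y_0,y_1))$. Then $$\mu_\varphi:\mathfrak g\to\mathfrak h\oplus^\omega\mathbb R,\qquad x\mapsto(\mu(x),\varphi(x,0)),$$ together with the action $\mathcal L_{(y,\lambda)}x:=\mathcal L_yx$, is a crossed module of Lie algebras.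
   Context: A crossed module of Lie algebras consists of Lie algebras $\mathfrak g,\mathfrak h$, a Lie algebra homomorphism $\mu:\mathfrak g\to\mathfrak h$ and a Lie algebra homomorphism $\mathcal L:\mathfrak h\to\mathrm{Der}(\mathfrak g)$, $y\mapsto\mathcal L_y$, such that $\mu(\mathcal L_yx)=[y,\mu(x)]$ and $\mathcal L_{\mu(x_0)}x_1=[x_0,x_1]$. The bracket $[\cdot,\cdot]_{\mathcal L}$ on $\mathfrak g\oplus\mathfrak h$ is $[(x_0,y_0),(x_1,y_1)]_{\mathcal L}=([x_0,x_1]+\mathcal L_{y_0}x_1-\mathcal L_{y_1}x_0,[y_0,y_1])$. Conditions (1)–(3) express that $(\omega,\varphi)$ is a 2-cocycle in the total complex of the double complex of the Lie 2-algebra (with trivial real coefficients). *)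

From HB Require Import structures.
From mathcomp Require Import all_boot all_order all_algebra.
From mathcomp Require Import reals.
Set Implicit Arguments. Unset Strict Implicit. Unset Printing Implicit Defensive.
Import Order.TTheory GRing.Theory Num.Theory.
Local Open Scope ring_scope.

Section LieDefs.
Variable R : realType.

Definition is_lie_bracket (V : lmodType R) (br : V -> V -> V) : Prop :=
  [/\ (forall (a : R) (u v w : V), br (a *: u + v) w = a *: br u w + br v w),
      (forall (a : R) (u v w : V), br w (a *: u + v) = a *: br w u + br w v),
      (forall u : V, br u u = 0) &
      (forall u v w : V, br u (br v w) + br v (br w u) + br w (br u v) = 0)].

Definition is_crossed_module (g h : lmodType R)
  (brg : g -> g -> g) (brh : h -> h -> h)
  (mu : g -> h) (L : h -> g -> g) : Prop :=
  is_lie_bracket brg /\ is_lie_bracket brh /\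
      (forall (a : R) (x x' : g), mu (a *: x + x') = a *: mu x + mu x') /\
      (forall x x' : g, mu (brg x x') = brh (mu x) (mu x')) /\
      (forall (a : R) (y y' : h) (x : g), L (a *: y + y') x = a *: L y x + L y' x) /\
      (forall (y : h) (a : R) (x x' : g), L y (a *: x + x') = a *: L y x + L y x') /\
      (forall (y : h) (x x' : g), L y (brg x x') = brg (L y x) x' + brg x (L y x')) /\
      (forall (y y' : h) (x : g), L (brh y y') x = L y (L y' x) - L y' (L y x)) /\
      (forall (y : h) (x : g), mu (L y x) = brh y (mu x)) /\
      (forall x0 x1 : g, L (mu x0) x1 = brg x0 x1).

Definition semidirect_bracket (g h : lmodType R)
  (brg : g -> g -> g) (brh : h -> h -> h) (L : h -> g -> g)
  (p q : (g * h)%type) : (g * h)%type :=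
  (brg p.1 q.1 + L p.2 q.1 - L q.2 p.1, brh p.2 q.2).

Definition omega_bracket (h : lmodType R) (brh : h -> h -> h)
  (omega : h -> h -> R) (p q : (h * R^o)%type) : (h * R^o)%type :=
  (brh p.1 q.1, - omega p.1 q.1).

Definition mu_phi (g h : lmodType R) (mu : g -> h) (phi : (g * h)%type -> R)
  (x : g) : (h * R^o)%type := (mu x, phi (x, 0)).

Definition omega_action (g h : lmodType R) (L : h -> g -> g)
  (p : (h * R^o)%type) (x : g) : g := L p.1 x.

End LieDefs.

From HB Require Import structures.
From mathcomp Require Import all_boot all_order all_algebra.
From mathcomp Require Import reals.
From mathcomp Require Import lra.
Set Implicit Arguments. Unset Strict Implicit. Unset Printing Implicit Defensive.
Import Order.TTheory GRing.Theory Num.Theory.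
Local Open Scope ring_scope.

(* The bracket of h (+)^omega R is that of h with the cocycle -omega in the
   central coordinate, so it is a Lie bracket exactly when omega is a
   2-cocycle, which is condition (1).  The map mu_phi is mu with the central
   coordinate phi(x, 0); it is a morphism and is equivariant because the
   special cases y0 = y1 = 0 and x0 = y1 = 0 of condition (3) read
   phi([x, x'], 0) = - omega(mu x, mu x') and phi(L_y x, 0) = - omega(y, mu x).
   The remaining axioms only involve L, which ignores the central coordinate. *)

Section LinearMaps.
Variables (R : pzRingType) (U V : lmodType R) (f : U -> V).
Hypothesis f_lin : linear f.

Lemma linear_map0 : f 0 = 0.
Proof. by have := f_lin (-1) 0 0; rewrite scaler0 addr0 scaleN1r addNr. Qed.

Lemma linear_mapD u v : f (u + v) = f u + f v.
Proof. by have := f_lin 1 u v; rewrite !scale1r. Qed.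

Lemma linear_mapN u : f (- u) = - f u.
Proof. by have := f_lin (-1) u 0; rewrite !addr0 linear_map0 addr0 !scaleN1r. Qed.

End LinearMaps.

Section BilinearMaps.
Variables (R : pzRingType) (U V : lmodType R) (b : U -> U -> V).
Hypotheses (b_linl : forall w, linear (b^~ w)) (b_linr : forall w, linear (b w)).

Lemma bilinear_map0l w : b 0 w = 0.
Proof. exact: linear_map0 (b_linl w). Qed.

Lemma bilinear_map0r w : b w 0 = 0.
Proof. exact: linear_map0 (b_linr w). Qed.

Lemma bilinear_mapDl w u v : b (u + v) w = b u w + b v w.
Proof. exact: linear_mapD (b_linl w) u v. Qed.

Lemma bilinear_mapDr w u v : b w (u + v) = b w u + b w v.
Proof. exact: linear_mapD (b_linr w) u v. Qed.

Lemma bilinear_mapNr u v : b u (- v) = - b u v.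
Proof. exact: linear_mapN (b_linr u) v. Qed.

Lemma alternating_antisym : (forall u, b u u = 0) -> forall u v, b u v = - b v u.
Proof.
move=> b_alt u v; apply/eqP; rewrite -addr_eq0; apply/eqP.
by have := b_alt (u + v); rewrite bilinear_mapDl !bilinear_mapDr !b_alt add0r addr0.
Qed.

End BilinearMaps.

Section LieBrackets.
Variables (R : realType) (V : lmodType R) (br : V -> V -> V).
Hypothesis br_lie : is_lie_bracket br.

Lemma lie_bracket_linl w : linear (br^~ w).
Proof. by case: br_lie => brl _ _ _ a u v; apply: brl. Qed.

Lemma lie_bracket_linr w : linear (br w).
Proof. by case: br_lie => _ brr _ _ a u v; apply: brr. Qed.

Lemma lie_bracket_antisym u v : br u v = - br v u.
Proof.
have [_ _ br_alt _] := br_lie.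
exact: alternating_antisym lie_bracket_linl lie_bracket_linr br_alt u v.
Qed.

Lemma lie_bracket0l w : br 0 w = 0.
Proof. exact: bilinear_map0l lie_bracket_linl w. Qed.

Lemma lie_bracket0r w : br w 0 = 0.
Proof. exact: bilinear_map0r lie_bracket_linr w. Qed.

End LieBrackets.

Section CentralExtension.
Variables (R : realType) (h : lmodType R) (brh : h -> h -> h) (omega : h -> h -> R).
Hypotheses (brh_lie : is_lie_bracket brh)
  (omega_linl : forall w, linear (omega^~ w : h -> R^o))
  (omega_linr : forall w, linear (omega w : h -> R^o))
  (omega_alt : forall u, omega u u = 0)
  (omega_cocycle : forall y0 y1 y2,
     - omega (brh y0 y1) y2 + omega (brh y0 y2) y1 - omega (brh y1 y2) y0 = 0).

Lemma omega_bracket_lie : is_lie_bracket (omega_bracket brh omega).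
Proof.
have [brh_linl brh_linr brh_alt brh_jacobi] := brh_lie.
have omega_antisym := alternating_antisym omega_linl omega_linr omega_alt.
split=> [a u v w|a u v w|u|u v w]; rewrite /omega_bracket /=.
- apply: injective_projections; rewrite /= ?brh_linl //.
  by rewrite (omega_linl w.1) opprD scalerN.
- apply: injective_projections; rewrite /= ?brh_linr //.
  by rewrite (omega_linr w.1) opprD scalerN.
- by rewrite brh_alt omega_alt oppr0.
apply: injective_projections; rewrite /= ?brh_jacobi //.
rewrite (lie_bracket_antisym brh_lie w.1) (bilinear_mapNr omega_linr).
rewrite (omega_antisym u.1) (omega_antisym v.1) (omega_antisym w.1).
have := omega_cocycle u.1 v.1 w.1; lra.
Qed.

End CentralExtension.

Section CrossedModuleExtension.
Variables (R : realType) (g h : lmodType R) (brg : g -> g -> g) (brh : h -> h -> h)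
  (mu : g -> h) (L : h -> g -> g) (omega : h -> h -> R) (phi : (g * h)%type -> R).
Hypotheses (cm : is_crossed_module brg brh mu L)
  (omega_linr : forall w, linear (omega w : h -> R^o))
  (omega_phi_cocycle : forall x0 x1 y0 y1,
     omega y0 y1 - omega (y0 + mu x0) (y1 + mu x1)
       = phi (semidirect_bracket brg brh L (x0, y0) (x1, y1))).

Lemma crossed_module_mu0 : mu 0 = 0.
Proof. by have [_ [_ [mu_lin _]]] := cm; apply: linear_map0 mu_lin. Qed.

Lemma crossed_module_action0l x : L 0 x = 0.
Proof.
have [_ [_ [_ [_ [L_linl _]]]]] := cm.
by apply: (linear_map0 (f := L^~ x)) => a y y'; apply: L_linl.
Qed.

Lemma crossed_module_action0r y : L y 0 = 0.
Proof. by have [_ [_ [_ [_ [_ [L_linr _]]]]]] := cm; apply: linear_map0 (L_linr y). Qed.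

Lemma phi_bracket x x' : phi (brg x x', 0) = - omega (mu x) (mu x').
Proof.
have [brg_lie [brh_lie _]] := cm.
have := omega_phi_cocycle x x' 0 0.
rewrite /semidirect_bracket /= !crossed_module_action0l !subr0 !addr0 !add0r.
by rewrite (lie_bracket0r brh_lie) (bilinear_map0r omega_linr) add0r => <-.
Qed.

Lemma phi_action y x : phi (L y x, 0) = - omega y (mu x).
Proof.
have [brg_lie [brh_lie _]] := cm.
have := omega_phi_cocycle 0 x y 0.
rewrite /semidirect_bracket /= crossed_module_mu0 crossed_module_action0r.
rewrite (lie_bracket0l brg_lie) (lie_bracket0r brh_lie) !addr0 (bilinear_map0r omega_linr).
by rewrite !add0r subr0 => <-.
Qed.

Lemma mu_phi_linear : linear (phi : _ -> R^o) -> linear (mu_phi mu phi).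
Proof.
move=> phi_lin a x x'; have [_ [_ [mu_lin _]]] := cm.
rewrite /mu_phi mu_lin; congr pair; rewrite -phi_lin.
by congr phi; apply: injective_projections; rewrite /= ?scaler0 ?addr0.
Qed.

Lemma mu_phi_morph x x' :
  mu_phi mu phi (brg x x') = omega_bracket brh omega (mu_phi mu phi x) (mu_phi mu phi x').
Proof. by have [_ [_ [_ [mu_morph _]]]] := cm; rewrite /mu_phi mu_morph phi_bracket. Qed.

Lemma mu_phi_equivariant p x :
  mu_phi mu phi (omega_action L p x)
    = omega_bracket brh omega p (mu_phi mu phi x).
Proof.
have [_ [_ [_ [_ [_ [_ [_ [_ [mu_equiv _]]]]]]]]] := cm.
by rewrite /mu_phi /omega_action mu_equiv phi_action.
Qed.

End CrossedModuleExtension.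

Theorem mainTheorem15 (R : realType) (g h : lmodType R)
  (brg : g -> g -> g) (brh : h -> h -> h) (mu : g -> h) (L : h -> g -> g)
  (omega : h -> h -> R) (phi : (g * h)%type -> R) :
  is_crossed_module brg brh mu L ->
  (* omega is an alternating bilinear form on h *)
  (forall (a : R) (u v w : h), omega (a *: u + v) w = a * omega u w + omega v w) ->
  (forall (a : R) (u v w : h), omega w (a *: u + v) = a * omega w u + omega w v) ->
  (forall u : h, omega u u = 0) ->
  (* phi is a linear form on g (+) h *)
  (forall (a : R) (p q : (g * h)%type), phi (a *: p + q) = a * phi p + phi q) ->
  (* (1) *)
  (forall y0 y1 y2 : h,
     - omega (brh y0 y1) y2 + omega (brh y0 y2) y1 - omega (brh y1 y2) y0 = 0) ->
  (* (2) *)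
  (forall (x1 x2 : g) (y : h),
     phi (x2, y) - phi (x1 + x2, y) + phi (x1, y + mu x2) = 0) ->
  (* (3) *)
  (forall (x0 x1 : g) (y0 y1 : h),
     omega y0 y1 - omega (y0 + mu x0) (y1 + mu x1)
       = phi (semidirect_bracket brg brh L (x0, y0) (x1, y1))) ->
  is_crossed_module brg (omega_bracket brh omega) (mu_phi mu phi) (omega_action L).
Proof.
move=> cm omega_linl omega_linr omega_alt phi_lin cocycle1 _ cocycle3.
have {}omega_linl w : linear (omega^~ w : h -> R^o) by move=> a u v; apply: omega_linl.
have {}omega_linr w : linear (omega w : h -> R^o) by move=> a u v; apply: omega_linr.
have {}phi_lin : linear (phi : _ -> R^o) by move=> a p q; apply: phi_lin.
have [brg_lie [brh_lie [_ [_ [L_linl [L_linr [L_der [L_morph [_ peiffer]]]]]]]]] := cm.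
split=> //; split.
  exact: omega_bracket_lie brh_lie omega_linl omega_linr omega_alt cocycle1.
split; first exact: mu_phi_linear cm phi_lin.
split; first exact: mu_phi_morph cm omega_linr cocycle3.
split; first by move=> a p p' x; apply: L_linl.
split; first by move=> p; apply: L_linr.
split; first by move=> p; apply: L_der.
split; first by move=> p p'; apply: L_morph.
split; first exact: mu_phi_equivariant cm omega_linr cocycle3.
exact: peiffer.
Qed.
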